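(* Let $V$ be a vector space over $\Bbbk$ of dimension $m\geq 2$, and write $W=V^*\otimes V$. The following data are given in $\mathtt{Rep}\,\operatorname{GL}(V)$. - The inclusion $\iota:\operatorname{PS}^m(W)\to W^{\otimes m}$. - The map $\mathrm{ev}^{\otimes m}:W^{\otimes m}\to\mathds{1}$ defined by $\alpha_1\otimes v_1\otimes\cdots\otimes\alpha_m\otimes v_m\mapsto\prod_i\alpha_i(v_i)$. - The inclusion $\kappa:\operatorname{PE}^m(V^* )\otimes V^{\otimes m}\oplus (V^* )^{\otimes m}\otimes\operatorname{PE}^m(V)\to(V^* )^{\otimes m}\otimes V^{\otimes m}$. - The map $\pi:(V^* )^{\otimes m}\otimes V^{\otimes m}\to\mathds{1}$ defined as the projection onto $\bigwedge^mV^*\otimes\bigwedge^mV$ followed by the isomorphism $\alpha_1\wedge\cdots\wedge\alpha_m\otimes v_1\wedge\cdots\wedge v_m\mapsto\sum_{\sigma\in S_m}(-1)^{|\sigma|}\prod_i\alpha_i(v_{\sigma(i)})$. Then there exist morphisms of $\operatorname{GL}(V)$-modules $$\varphi:\operatorname{PE}^m(V^* )\otimes V^{\otimes m}\oplus (V^* )^{\otimes m}\otimes\operatorname{PE}^m(V)\to\operatorname{PS}^m(W),\qquad \psi:(V^* )^{\otimes m}\otimes V^{\otimes m}\to W^{\otimes m}$$ such that $\iota\circ\varphi=\psi\circ\kappa$ and $\mathrm{ev}^{\otimes m}\circ\psi=\pi$.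
   Context: $\Bbbk$ is an algebraically closed field of characteristic $p>2$. For an object $X$ of a symmetric monoidal $\Bbbk$-linear category, $\operatorname{S}^jX$ and $\bigwedge^jX$ denote the largest quotients of $X^{\otimes j}$ on which $S_j$ (acting via the braiding) acts trivially, respectively by the sign. Since $p\neq 2$, $X^{\otimes 2}=\operatorname{S}^2X\oplus\bigwedge^2X$. The parity of a permutation $\sigma$ is written $|\sigma|$. Define $$\operatorname{PS}^j(X)=\bigoplus_{i=0}^{j-2}X^{\otimes i}\otimes\textstyle\bigwedge^2X\otimes X^{\otimes(j-i-2)},\qquad \operatorname{PE}^j(X)=\bigoplus_{i=0}^{j-2}X^{\otimes i}\otimes\operatorname{S}^2X\otimes X^{\otimes(j-i-2)}.$$ Each comes with a map to $X^{\otimes j}$ given by the inclusions of direct summands of $X^{\otimes j}$. This gives exact sequences $\operatorname{PS}^j(X)\to X^{\otimes j}\to\operatorname{S}^jX\to 0$ and $\operatorname{PE}^j(X)\to X^{\otimes j}\to\bigwedge^jX\to0$. *)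

From HB Require Import structures.
From mathcomp Require Import all_boot all_order all_algebra.
From mathcomp Require Import perm.
Set Implicit Arguments. Unset Strict Implicit. Unset Printing Implicit Defensive.
Import GRing.Theory.
Local Open Scope ring_scope.

(* V = K^m with standard basis e_0..e_{m-1}; V^dual with dual basis.
   A tensor in X_1 ⊗ ... ⊗ X_n (each X_l ∈ {V, V^dual}) is its coordinate
   function on index tuples (n.-tuple 'I_m). *)
Notation tens K m n := {ffun n.-tuple 'I_m -> (GRing.Field.sort K)^o}.

(* signature: tnth s l = true iff factor l is V, false iff it is V^dual *)
(* GL(V)-action: V-factor by g, V^dual-factor by the contragredient (g^-1)^T *)
Definition tact (K : fieldType) (m n : nat) (s : n.-tuple bool)
  (g : 'M[K]_m) (t : tens K m n) : tens K m n :=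
  [ffun j : n.-tuple 'I_m => \sum_(k : n.-tuple 'I_m)
     (\prod_(l < n) (if tnth s l then g (tnth j l) (tnth k l)
                      else invmx g (tnth k l) (tnth j l))) * t k].

(* index read as nat (0 out of range) *)
Definition idx (m n : nat) (j : n.-tuple 'I_m) (k : nat) : nat :=
  nth 0%N (map val j) k.

Definition swapn (a b k : nat) : nat :=
  if k == a then b else if k == b then a else k.

Definition symf (K : fieldType) (m n : nat) (f : nat -> nat) (t : tens K m n) :=
  forall j j' : n.-tuple 'I_m, (forall k, idx j' k = idx j (f k)) -> t j' = t j.
Definition altf (K : fieldType) (m n : nat) (f : nat -> nat) (t : tens K m n) :=
  forall j j' : n.-tuple 'I_m, (forall k, idx j' k = idx j (f k)) -> t j' = - t j.

(* W^{⊗m} = (V^dual⊗V)^{⊗m}: positions 2i (V^dual) and 2i+1 (V) form the i-th W *)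
Definition sgnW (m : nat) : (m + m).-tuple bool := [tuple odd i | i < m + m].
(* (V^dual)^{⊗m} ⊗ V^{⊗m}: positions < m are V^dual, positions >= m are V *)
Definition sgnC (m : nat) : (m + m).-tuple bool := [tuple (m <= i)%N | i < m + m].

Arguments sgnW : clear implicits.
Arguments sgnC : clear implicits.

Notation TW K m := (tens K m (m + m)).
Notation TC K m := (tens K m (m + m)).

(* swap of the W-factors i and i+1 in W^{⊗m} *)
Definition Wswap (i : nat) : nat -> nat :=
  fun k => swapn i.*2 i.*2.+2 (swapn i.*2.+1 i.*2.+3 k).

(* PS^m(W) = ⊕_{i<m-1} W^{⊗i} ⊗ Λ²W ⊗ W^{⊗(m-i-2)}, Λ²W ⊂ W⊗W the
   antisymmetric tensors (sign component, p ≠ 2). Elements: families. *)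
Notation PScod K m := {ffun 'I_m.-1 -> TW K m}.
Definition inPS (K : fieldType) (m : nat) (y : PScod K m) :=
  forall i : 'I_m.-1, altf (Wswap i) (y i).
Definition iota_PS (K : fieldType) (m : nat) (y : PScod K m) : TW K m :=
  \sum_(i < m.-1) y i.
Definition actPS (K : fieldType) (m : nat) (g : 'M[K]_m) (y : PScod K m)
  : PScod K m := [ffun i => tact (sgnW m) g (y i)].

(* PE^m(V^dual)⊗V^{⊗m} ⊕ (V^dual)^{⊗m}⊗PE^m(V): first component, summand i =
   tensors symmetric in V^dual-positions i,i+1; second component, summand i =
   tensors symmetric in V-positions m+i, m+i+1. *)
Notation PEdom K m :=
  ({ffun 'I_m.-1 -> TC K m} * {ffun 'I_m.-1 -> TC K m})%type.
Definition inPE (K : fieldType) (m : nat) (x : PEdom K m) :=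
  (forall i : 'I_m.-1, symf (swapn i i.+1) (x.1 i)) /\
  (forall i : 'I_m.-1, symf (swapn (m + i) (m + i).+1) (x.2 i)).
Definition kappa (K : fieldType) (m : nat) (x : PEdom K m) : TC K m :=
  \sum_(i < m.-1) x.1 i + \sum_(i < m.-1) x.2 i.
Definition actPE (K : fieldType) (m : nat) (g : 'M[K]_m) (x : PEdom K m)
  : PEdom K m :=
  ([ffun i => tact (sgnC m) g (x.1 i)], [ffun i => tact (sgnC m) g (x.2 i)]).

(* ev^{⊗m}: e^dual_{a_1}⊗e_{b_1}⊗...⊗e^dual_{a_m}⊗e_{b_m} ↦ ∏ δ(a_i,b_i) *)
Definition evm (K : fieldType) (m : nat) (t : TW K m) : K :=
  \sum_(j : (m + m).-tuple 'I_m | [forall i : 'I_m, idx j i.*2 == idx j i.*2.+1])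
    t j.

(* π: α_1⊗..⊗α_m⊗v_1⊗..⊗v_m ↦ α_1∧..∧α_m ⊗ v_1∧..∧v_m ↦
   Σ_σ (-1)^σ ∏_i α_i(v_{σ(i)}), extended linearly (basis tensors) *)
Definition piC (K : fieldType) (m : nat) (t : TC K m) : K :=
  \sum_(a : m.-tuple 'I_m) \sum_(b : m.-tuple 'I_m)
    t (cat_tuple a b) *
    \sum_(s : 'S_m) (-1) ^+ s * \prod_(i < m) ((tnth a i == tnth b (s i))%:R).

From HB Require Import structures.
From mathcomp Require Import all_boot all_order all_algebra.
From mathcomp Require Import perm zify.
Set Implicit Arguments. Unset Strict Implicit. Unset Printing Implicit Defensive.
Import GRing.Theory.
Local Open Scope ring_scope.

(* psi sends a1 ⊗ ... ⊗ am ⊗ v1 ⊗ ... ⊗ vm to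
   sum_s sgn(s) (a1 ⊗ v_s(1)) ⊗ ... ⊗ (am ⊗ v_s(m)): it re-pairs the
   covectors with the vectors and antisymmetrises over the pairing. As a
   signed sum of permutations of tensor factors it is GL(V)-equivariant, and
   ev^{⊗m} ∘ psi = pi term by term. psi is alternating in the v's, so (as
   p <> 2) it kills the tensors symmetric in two adjacent v's, i.e. the
   second summand of the domain of kappa. On a tensor symmetric in a_i and
   a_(i+1), exchanging the W-factors i and i+1 of its image amounts to
   composing s with a transposition, so the image is alternating there;
   hence phi, equal to psi on the i-th summand of the first component, lands
   in the i-th summand of PS^m(W), and iota ∘ phi = psi ∘ kappa. *)

Section TupleIndex.
Variables (M n : nat).
Implicit Types (j : n.-tuple 'I_M) (σ : 'S_n).

Lemma idx_ord j (l : 'I_n) : idx j l = tnth j l.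
Proof. by rewrite /idx (nth_map (tnth j l)) ?size_tuple // -tnth_nth. Qed.

Lemma idx_out j k : (n <= k)%N -> idx j k = 0%N.
Proof. by move=> h; rewrite /idx nth_default // size_map size_tuple. Qed.

Lemma eq_from_idx j j' : (forall l : 'I_n, idx j l = idx j' l) -> j = j'.
Proof. by move=> h; apply: eq_from_tnth => l; apply: val_inj; rewrite /= -!idx_ord. Qed.

Definition perm_tuple σ j : n.-tuple 'I_M := [tuple tnth j (σ l) | l < n].

Lemma idx_perm_tuple σ j (l : 'I_n) : idx (perm_tuple σ j) l = idx j (σ l).
Proof. by rewrite !idx_ord tnth_mktuple. Qed.

Lemma perm_tupleM σ τ j : perm_tuple (σ * τ) j = perm_tuple σ (perm_tuple τ j).
Proof. by apply: eq_from_tnth => l; rewrite !tnth_mktuple permM. Qed.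

Lemma perm_tuple1 j : perm_tuple 1 j = j.
Proof. by apply: eq_from_tnth => l; rewrite tnth_mktuple perm1. Qed.

Lemma perm_tupleK σ : cancel (perm_tuple σ) (perm_tuple σ^-1).
Proof. by move=> j; rewrite -perm_tupleM mulVg perm_tuple1. Qed.

Lemma perm_tuple_inj σ : injective (perm_tuple σ).
Proof. exact: can_inj (perm_tupleK σ). Qed.

Lemma perm_tuple_idx_rel σ (f : nat -> nat) j j' :
  (forall l : 'I_n, f l = σ l) -> (forall k, idx j' k = idx j (f k)) ->
  j' = perm_tuple σ j.
Proof. by move=> fσ hj; apply: eq_from_idx => l; rewrite hj fσ idx_perm_tuple. Qed.

Lemma symf_perm_tuple (K : fieldType) σ (f : nat -> nat) (t : tens K M n) :
  (forall l : 'I_n, f l = σ l) -> (forall k, (n <= k)%N -> f k = k) ->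
  symf f t -> forall j, t (perm_tuple σ j) = t j.
Proof.
move=> fσ fout tf j; apply: tf => k; case: (ltnP k n) => [kn | nk].
  by rewrite -[k]/(nat_of_ord (Ordinal kn)) idx_perm_tuple fσ.
by rewrite fout // !idx_out.
Qed.

End TupleIndex.

Lemma idx_cat M a b (x : a.-tuple 'I_M) (y : b.-tuple 'I_M) k :
  idx (cat_tuple x y) k = if (k < a)%N then idx x k else idx y (k - a).
Proof. by rewrite /idx /= map_cat nth_cat size_map size_tuple. Qed.

Lemma swapn_id a b k : k <> a -> k <> b -> swapn a b k = k.
Proof. by move=> /eqP/negbTE ka /eqP/negbTE kb; rewrite /swapn ka kb. Qed.

Lemma swapn_lt n a b k : (a < n)%N -> (b < n)%N -> (k < n)%N -> (swapn a b k < n)%N.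
Proof. by rewrite /swapn; case: ifP => // _; case: ifP. Qed.

Lemma swapn_double a b k : swapn a.*2 b.*2 k.*2 = (swapn a b k).*2.
Proof. by rewrite /swapn !(inj_eq (can_inj doubleK)); case: ifP => // _; case: ifP. Qed.

Lemma swapn_doubleS a b k : swapn a.*2.+1 b.*2.+1 k.*2.+1 = (swapn a b k).*2.+1.
Proof. by rewrite /swapn !eqSS !(inj_eq (can_inj doubleK)); case: ifP => // _; case: ifP. Qed.

Lemma swapn_parity a b k (odd_ab : odd a = odd b) : odd k != odd a -> swapn a b k = k.
Proof. by move=> kab; apply: swapn_id => e; move: kab; rewrite e ?odd_ab eqxx. Qed.

Lemma Wswap_double i k : Wswap i k.*2 = (swapn i i.+1 k).*2.
Proof.
rewrite /Wswap (@swapn_parity i.*2.+1) /= ?odd_double //.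
by rewrite -[i.*2.+2]/(i.+1).*2 swapn_double.
Qed.

Lemma Wswap_doubleS i k : Wswap i k.*2.+1 = (swapn i i.+1 k).*2.+1.
Proof.
rewrite /Wswap -[i.*2.+3]/(i.+1).*2.+1 swapn_doubleS.
by rewrite (@swapn_parity i.*2) /= ?odd_double.
Qed.

Lemma swapn_shift n a b k : (n <= k)%N -> swapn (n + a) (n + b) k = (n + swapn a b (k - n))%N.
Proof.
by move=> /subnKC e; rewrite -{1}e /swapn !eqn_add2l; case: ifP => // _; case: ifP.
Qed.

Definition swap_pos n (a b : nat) : 'S_n :=
  if insub a is Some a' then if insub b is Some b' then tperm a' b' else 1 else 1.

Lemma swap_posE n a b (l : 'I_n) :
  (a < n)%N -> (b < n)%N -> val (swap_pos n a b l) = swapn a b l.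
Proof.
move=> an bn; rewrite /swap_pos !insubT /swapn.
case: tpermP => [->|->|/eqP ka /eqP kb] /=; rewrite ?eqxx //.
- by case: eqP => // ->.
- by move: ka kb; rewrite -!val_eqE /= => /negbTE-> /negbTE->.
Qed.

Lemma odd_swap_posS n i : (i.+1 < n)%N -> odd_perm (swap_pos n i i.+1).
Proof.
move=> lt_in; have lt_i := ltnW lt_in; rewrite /swap_pos !insubT.
by rewrite odd_tperm -val_eqE /= neq_ltn ltnSn.
Qed.

Section TensorMaps.
Variables (K : fieldType) (M n : nat).

Definition perm_tens (σ : 'S_n) (t : tens K M n) : tens K M n :=
  [ffun j => t (perm_tuple σ j)].

Lemma perm_tens_is_linear σ : linear (perm_tens σ).
Proof. by move=> a t u; apply/ffunP => j; rewrite !ffunE. Qed.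

HB.instance Definition _ σ := GRing.isLinear.Build K (tens K M n) (tens K M n) _
  (perm_tens σ) (perm_tens_is_linear σ).

Lemma tact_is_linear s g : linear (@tact K M n s g).
Proof.
move=> a t u; apply/ffunP => j; rewrite !ffunE scaler_sumr -big_split.
by apply: eq_bigr => k _; rewrite !ffunE mulrDr scalerAr.
Qed.

HB.instance Definition _ s g := GRing.isLinear.Build K (tens K M n) (tens K M n) _
  (@tact K M n s g) (tact_is_linear s g).

Lemma tact_perm_tens (σ : 'S_n) (s s' : n.-tuple bool) g t :
  (forall l, tnth s' (σ l) = tnth s l) ->
  tact s' g (perm_tens σ t) = perm_tens σ (tact s g t).
Proof.
move=> sσ; apply/ffunP => j; rewrite !ffunE.
rewrite [RHS](reindex_inj (@perm_tuple_inj M n σ)); apply: eq_bigr => k _.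
rewrite ffunE (reindex_inj (@perm_inj _ σ)); congr (_ * _); apply: eq_bigr => l _.
by rewrite !tnth_mktuple sσ.
Qed.
End TensorMaps.

Section DoubledTuples.
Variables (M n : nat).

Lemma half_ord_lt (l : 'I_(n + n)) : (l./2 < n)%N.
Proof. by rewrite ltn_half_double -addnn. Qed.

Lemma double_ord_lt (i : 'I_n) : (i.*2 < n + n)%N.
Proof. by rewrite addnn ltn_double. Qed.

Definition double_tuple (d : n.-tuple 'I_M) : (n + n).-tuple 'I_M :=
  [tuple tnth d (Ordinal (half_ord_lt l)) | l < n + n].

Definition evens (j : (n + n).-tuple 'I_M) : n.-tuple 'I_M :=
  [tuple tnth j (Ordinal (double_ord_lt i)) | i < n].

Lemma idx_double_tuple d k : idx (double_tuple d) k = idx d k./2.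
Proof.
case: (ltnP k (n + n)) => [kn | nk]; last first.
  by rewrite !idx_out // leqNgt ltn_half_double -addnn -leqNgt.
by rewrite -[k]/(nat_of_ord (Ordinal kn)) idx_ord tnth_mktuple -(idx_ord d (Ordinal _)).
Qed.

Lemma idx_evens j k : idx (evens j) k = idx j k.*2.
Proof.
case: (ltnP k n) => [kn | nk]; last by rewrite !idx_out // addnn leq_double.
by rewrite -[k]/(nat_of_ord (Ordinal kn)) idx_ord tnth_mktuple -(idx_ord j (Ordinal _)).
Qed.

Lemma sum_diagonal_tuples (R : nmodType) (h : (n + n).-tuple 'I_M -> R) :
  \sum_(j | [forall i : 'I_n, idx j i.*2 == idx j i.*2.+1]) h j
    = \sum_(d : n.-tuple 'I_M) h (double_tuple d).
Proof.
rewrite (reindex_onto double_tuple evens) /=; last first.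
  move=> j /forallP diag; apply: eq_from_idx => l.
  rewrite idx_double_tuple idx_evens -[in RHS](odd_double_half l).
  case: (odd l); rewrite ?add0n // add1n.
  by have /eqP := diag (Ordinal (half_ord_lt l)).
apply: eq_bigl => d; apply/andP; split.
  apply/forallP => i; rewrite !idx_double_tuple doubleK.
  by rewrite -[(i.*2.+1)./2]/(uphalf i.*2) uphalf_double.
by apply/eqP/eq_from_idx => i; rewrite idx_evens idx_double_tuple doubleK.
Qed.

End DoubledTuples.

Lemma prod_tnth_eq_perm (R : comPzSemiRingType) M n (s : 'S_n) (a b : n.-tuple 'I_M) :
  \prod_(i < n) ((tnth a i == tnth b (s i))%:R : R) = (a == perm_tuple s b)%:R.
Proof.
case: eqP => [->|neq]; first by apply: big1 => i _; rewrite tnth_mktuple eqxx.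
have [i ai | same] := pickP (fun i => tnth a i != tnth b (s i)).
  by rewrite (bigD1 i) //= (negbTE ai) mul0r.
by case: neq; apply: eq_from_tnth => i; rewrite tnth_mktuple; apply/eqP/negbFE/same.
Qed.

Lemma piC_perm_sum (K : fieldType) m (t : TC K m) :
  piC t = \sum_(s : 'S_m) (-1) ^+ s *
            \sum_(b : m.-tuple 'I_m) (t (cat_tuple (perm_tuple s b) b) : K).
Proof.
rewrite /piC exchange_big /=.
under eq_bigr => b _ do under eq_bigr => a _ do rewrite mulr_sumr.
under eq_bigr => b _ do rewrite exchange_big /=.
rewrite exchange_big /=; apply: eq_bigr => s _; rewrite mulr_sumr; apply: eq_bigr => b _.
under eq_bigr => a _ do rewrite prod_tnth_eq_perm.
rewrite (bigD1 (perm_tuple s b)) //= eqxx mulr1 mulrC big1 ?addr0 // => a /negbTE->.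
by rewrite !mulr0.
Qed.

Section Psi.
Variable m' : nat.
Local Notation m := m'.+1.

(* Position l < m (the covector a_l) goes to 2l and position m + k (the
   vector v_k) goes to 2 s(k) + 1, so that v_k is paired with a_s(k). *)
Definition pair_pos (s : 'S_m) (l : nat) : nat :=
  if (l < m)%N then l.*2 else (s (inord (l - m))).*2.+1.

Lemma pair_pos_lt s (l : 'I_(m + m)) : (pair_pos s l < m + m)%N.
Proof.
rewrite /pair_pos -!muln2; case: ifP => h; first lia.
have := ltn_ord (s (inord (l - m))); lia.
Qed.

Lemma pair_pos_inj s : injective (fun l : 'I_(m + m) => Ordinal (pair_pos_lt s l)).
Proof.
move=> x y [] ; rewrite /pair_pos -!muln2.
have hx := ltn_ord x; have hy := ltn_ord y.
case: ifP => h1; case: ifP => h2 => e; apply: val_inj => /=; try lia.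
move: e => /eqP; rewrite eqSS eqn_pmul2r // => /eqP/val_inj/perm_inj/(congr1 val).
rewrite /= !inordK; lia.
Qed.

Definition pair_perm s : 'S_(m + m) := perm (@pair_pos_inj s).

Lemma pair_permE s l : val (pair_perm s l) = pair_pos s l.
Proof. by rewrite permE. Qed.

Lemma sgnW_pair_perm s l : tnth (sgnW m) (pair_perm s l) = tnth (sgnC m) l.
Proof.
rewrite !tnth_mktuple pair_permE /pair_pos.
by case: ifP => h; rewrite ?odd_double /=; lia.
Qed.

Variable K : fieldType.

Definition psi (t : TC K m) : TW K m :=
  \sum_(s : 'S_m) (-1) ^+ s *: perm_tens (pair_perm s) t.

Lemma psi_is_linear : linear psi.
Proof.
move=> a t u; rewrite /psi scaler_sumr -big_split; apply: eq_bigr => s _.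
by rewrite linearP scalerDr !scalerA mulrC.
Qed.

HB.instance Definition _ := GRing.isLinear.Build K (TC K m) (TW K m) _ psi psi_is_linear.

Lemma psiE t j : psi t j = \sum_(s : 'S_m) (-1) ^+ s * t (perm_tuple (pair_perm s) j).
Proof. by rewrite sum_ffunE; apply: eq_bigr => s _; rewrite !ffunE. Qed.

Lemma psi_tact g t : psi (tact (sgnC m) g t) = tact (sgnW m) g (psi t).
Proof.
rewrite linear_sum; apply: eq_bigr => s _.
by rewrite linearZ /= (tact_perm_tens _ _ (@sgnW_pair_perm s)).
Qed.

Definition Wswap_perm i : 'S_(m + m) :=
  (swap_pos (m + m) i.*2.+1 i.*2.+3 * swap_pos (m + m) i.*2 i.*2.+2)%g.

Lemma Wswap_permE i l : (i < m')%N -> val (Wswap_perm i l) = Wswap i l.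
Proof. by move=> im; rewrite permM !swap_posE // -!addnn; lia. Qed.

Lemma pair_permM_Wswap i s : (i < m')%N ->
  (pair_perm s * Wswap_perm i = swap_pos (m + m) i i.+1 * pair_perm (s * swap_pos m i i.+1))%g.
Proof.
move=> im; apply/permP => l; apply: val_inj.
rewrite permM [in RHS]permM Wswap_permE // !pair_permE swap_posE; try lia.
rewrite /pair_pos; case: (ltnP l m) => lm.
  by rewrite swapn_lt ?Wswap_double //; lia.
rewrite swapn_id; try lia.
rewrite ltnNge lm /= Wswap_doubleS permM swap_posE //; lia.
Qed.

Lemma pair_perm_swapM i s : (i < m')%N ->
  pair_perm (swap_pos m i i.+1 * s)%g = (swap_pos (m + m) (m + i) (m + i).+1 * pair_perm s)%g.
Proof.
move=> im; apply/permP => l; apply: val_inj.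
rewrite permM !pair_permE swap_posE; try lia.
rewrite /pair_pos; case: (ltnP l m) => lm.
  by rewrite swapn_id ?lm //; lia.
have lm' : (l - m < m)%N by have := ltn_ord l; lia.
rewrite -addnS swapn_shift // ltnNge leq_addr /= addKn permM.
congr ((nat_of_ord (s _)).*2.+1); apply: val_inj.
by rewrite swap_posE //= ?inordK ?swapn_lt //; lia.
Qed.

Lemma psi_alt i t : (i < m')%N -> symf (swapn i i.+1) t -> altf (Wswap i) (psi t).
Proof.
move=> im ht J J' hJ.
rewrite (@perm_tuple_idx_rel _ _ (Wswap_perm i) _ _ _ _ hJ) => [|l]; last by rewrite Wswap_permE.
have tV j : t (perm_tuple (swap_pos (m + m) i i.+1) j) = t j.
  apply: (symf_perm_tuple _ _ ht) => [l | k km]; first by rewrite swap_posE //; lia.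
  by apply: swapn_id; lia.
rewrite !psiE [in RHS](reindex_inj (mulIg (swap_pos m i i.+1))) -sumrN.
apply: eq_bigr => s _; rewrite -perm_tupleM pair_permM_Wswap // perm_tupleM tV.
by rewrite odd_permM odd_swap_posS // signr_addb mulrN1 mulNr opprK.
Qed.

Lemma psi_sym_zero i t : (2%:R : K) != 0 -> (i < m')%N ->
  symf (swapn (m + i) (m + i).+1) t -> psi t = 0.
Proof.
move=> h2 im ht; apply/ffunP => J; rewrite psiE ffunE.
have tC j : t (perm_tuple (swap_pos (m + m) (m + i) (m + i).+1) j) = t j.
  apply: (symf_perm_tuple _ _ ht) => [l | k km]; first by rewrite swap_posE //; lia.
  by apply: swapn_id; lia.
set S := \sum_s _.
have eS : S = - S.
  rewrite {1}/S (reindex_inj (mulgI (swap_pos m i i.+1))) -sumrN; apply: eq_bigr => s _.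
  rewrite pair_perm_swapM // perm_tupleM tC odd_permM.
  by rewrite odd_swap_posS // signr_addb mulN1r mulNr.
by move/eqP: eS; rewrite -subr_eq0 opprK -mulr2n -mulr_natr mulf_eq0 (negbTE h2) orbF => /eqP.
Qed.

Lemma pair_perm_double s (d : m.-tuple 'I_m) :
  perm_tuple (pair_perm s) (double_tuple d) = cat_tuple d (perm_tuple s d).
Proof.
apply: eq_from_idx => l; rewrite idx_perm_tuple pair_permE idx_double_tuple idx_cat /pair_pos.
case: ifP => lm; first by rewrite doubleK.
have lm' : (l - m < m)%N by have := ltn_ord l; lia.
by rewrite (half_bit_double _ true) -[in RHS](@inordK m' (l - m)) // idx_perm_tuple.
Qed.

Lemma evm_psi t : evm (psi t) = piC t.
Proof.
rewrite piC_perm_sum /evm; under eq_bigr do rewrite psiE.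
have invS_inj : injective (fun s : 'S_m => s^-1)%g by exact: invg_inj.
rewrite exchange_big /= [RHS](reindex_inj invS_inj) /=; apply: eq_bigr => s _.
rewrite odd_permV -mulr_sumr (sum_diagonal_tuples (fun J => t (perm_tuple (pair_perm s) J))).
congr (_ * _); rewrite [RHS](reindex_inj (@perm_tuple_inj _ _ s)) /=; apply: eq_bigr => d _.
by rewrite pair_perm_double perm_tupleK.
Qed.

End Psi.

Theorem lemma2p2 (K : closedFieldType) (p : nat) (hp : p \in [pchar K])
  (hp2 : (2 < p)%N) (m : nat) (hm : (2 <= m)%N) :
  exists (phi : PEdom K m -> PScod K m) (psi : TC K m -> TW K m),
    (forall (a : K) (x y : PEdom K m), inPE x -> inPE y ->
        phi (a *: x + y) = a *: phi x + phi y) /\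
    (forall x : PEdom K m, inPE x -> inPS (phi x)) /\
    (forall (g : 'M[K]_m) (x : PEdom K m), g \in unitmx -> inPE x ->
        phi (actPE g x) = actPS g (phi x)) /\
    (forall (a : K) (t u : TC K m), psi (a *: t + u) = a *: psi t + psi u) /\
    (forall (g : 'M[K]_m) (t : TC K m), g \in unitmx ->
        psi (tact (sgnC m) g t) = tact (sgnW m) g (psi t)) /\
    (forall x : PEdom K m, inPE x -> iota_PS (phi x) = psi (kappa x)) /\
    (forall t : TC K m, evm (psi t) = piC t).
Proof.
case: m hm => [|m'] // _.
have two_neq0 : (2%:R : K) != 0.
  by rewrite -(dvdn_pcharf hp); apply/negP => /dvdn_leq; lia.
exists (fun x : PEdom K m'.+1 => [ffun i => psi (x.1 i)] : PScod K m'.+1), (@psi m' K).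
split=> [a x y _ _|]; first by apply/ffunP => i; rewrite !ffunE linearP.
split=> [x [sym1 _] i|]; first by rewrite ffunE; exact: psi_alt (ltn_ord i) (sym1 i).
split=> [g x _ _|]; first by apply/ffunP => i; rewrite !ffunE psi_tact.
split; first exact: linearP.
split=> [g t _|]; first exact: psi_tact.
split=> [x [_ sym2]|]; last exact: evm_psi.
rewrite /iota_PS /kappa linearD !linear_sum /= [X in _ + X]big1 ?addr0 => [|i _].
  by apply: eq_bigr => i _; rewrite ffunE.
exact: psi_sym_zero two_neq0 (ltn_ord i) (sym2 i).
Qed.
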